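(* Assume the matching setting described in the context. Let $M=\{e_1,\ldots,e_k\}$ be a matching and $\sigma_k\in\Omega$ with $M\subseteq\sigma_k$. Run the following procedure: for $i=k,k-1,\ldots,1$, choose an orientation $(u,v)$ of $e_i=\{u,v\}$; select $(u',v')\in\mathcal{N}_{\sigma_i}(u,v)\setminus\overrightarrow{\{e_1,\ldots,e_{i-1}\}}$ uniformly at random; set $\sigma_{i-1}=\mathrm{Swap}_{\sigma_i}((u,v),(u',v'))$. Output $\sigma_0$. Then: (1) the procedure is well defined, in the sense that $e_i\in\sigma_i$ at iteration $i$; (2) it can output $\sigma_0\in\Omega$ if and only if $\hat\psi(M,\sigma_0)=\sigma_k$; (3) distinct executions, i.e. executions differing in the choice of $(u',v')$ for some $i$, produce distinct outputs.
   Context: Let $G=(V,E)$ be an undirected graph with $|V|=2n$ of one of the following two types: [P1] $G$ is the complete graph on $V$; [P2] $V$ is partitioned into sets $A_1,B_1,\ldots,A_r,B_r$ with $|A_i|=|B_i|$ and $E=\{\{u,v\}:u\in A_i,v\in B_i,i\in[r]\}$. In both cases, whenever $(u',u,v,v')$ is a path in $G$ with distinct nodes, $\{u',v'\}\in E$. $\Omega$ is the set of perfect matchings of $G$ (sets of edges). For a single edge $e=\{u,v\}$ and $\sigma\in\Omega$, let $u',v'$ be the nodes with $\{u,u'\},\{v,v'\}\in\sigma$, and set $\hat\psi(\{e\},\sigma)=(\sigma\setminus\{\{u,u'\},\{v,v'\}\})\cup\{\{u,v\},\{u',v'\}\}$. For a matching $M=\{e_1,\ldots,e_k\}$ set $\hat\psi(M,\sigma)=\sigma_k$,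 where $\sigma_0=\sigma$ and $\sigma_i=\hat\psi(\{e_i\},\sigma_{i-1})$; this is independent of the ordering of $M$. For $S\subseteq E$ let $\overrightarrow S=\{(u,v),(v,u):\{u,v\}\in S\}$. For $\sigma\in\Omega$ and $(u,v),(u',v')\in\overrightarrow\sigma$ let $$\mathrm{Swap}_\sigma((u,v),(u',v'))=(\sigma\setminus\{\{u,v\},\{u',v'\}\})\cup\{\{u,u'\},\{v,v'\}\},$$ and let $\mathcal{N}_\sigma(u,v)=\{(u',v')\in\overrightarrow\sigma:\mathrm{Swap}_\sigma((u,v),(u',v'))\in\Omega\}$. *)

From mathcomp Require Import all_boot.
Set Implicit Arguments. Unset Strict Implicit. Unset Printing Implicit Defensive.

Section Matchings.
Variable V : finType.

Definition is_P1 (adj : rel V) : Prop := forall u v, adj u v = (u != v).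

(* Graph of type [P2]: V partitioned into A_1,B_1,...,A_r,B_r with
   |A_i| = |B_i|; part x = i and side x = true means x \in A_i,
   side x = false means x \in B_i; edges join A_i and B_i. *)
Definition is_P2 (adj : rel V) : Prop :=
  exists (r : nat) (part : V -> 'I_r) (side : V -> bool),
    (forall i : 'I_r, #|[set x | (part x == i) && side x]|
                      = #|[set x | (part x == i) && ~~ side x]|) /\
    (forall u v, adj u v = (part u == part v) && (side u != side v)).

Definition is_edge (adj : rel V) (e : {set V}) : bool :=
  [exists u, exists v, adj u v && (e == [set u; v])].

Definition edge_of (p : V * V) : {set V} := [set p.1; p.2].

Definition is_pm (adj : rel V) (s : {set {set V}}) : bool :=
  [forall e in s, is_edge adj e] && [forall x, #|[set e in s | x \in e]| == 1].

Definition Omega (adj : rel V) : {set {set {set V}}} := [set s | is_pm adj s].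

(* Partner of u in sigma: the w with {u,w} in sigma (u if none). *)
Definition partner (s : {set {set V}}) (u : V) : V :=
  odflt u [pick w | [set u; w] \in s].

Definition psi1 (s : {set {set V}}) (p : V * V) : {set {set V}} :=
  let u := p.1 in let v := p.2 in
  let u' := partner s u in let v' := partner s v in
  (s :\: [set [set u; u']; [set v; v']]) :|: [set [set u; v]; [set u'; v']].

Definition psi (M : seq (V * V)) (s : {set {set V}}) : {set {set V}} :=
  foldl psi1 s M.

Definition arrow (S : {set {set V}}) : {set V * V} :=
  [set p : V * V | [set p.1; p.2] \in S].

Definition Swap (s : {set {set V}}) (uv c : V * V) : {set {set V}} :=
  (s :\: [set [set uv.1; uv.2]; [set c.1; c.2]]) :|:
  [set [set uv.1; c.1]; [set uv.2; c.2]].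

Definition Nbr (adj : rel V) (s : {set {set V}}) (uv : V * V) : {set V * V} :=
  [set c in arrow s | Swap s uv c \in Omega adj].

(* candidates: N_sigma(u,v) \ arrow{e_1,...,e_{i-1}}, es = [e_1;...;e_{i-1}] *)
Definition cand (adj : rel V) (s : {set {set V}}) (uv : V * V)
    (es : seq (V * V)) : {set V * V} :=
  Nbr adj s uv :\: arrow [set edge_of p | p in es].

Definition orient (b : bool) (p : V * V) : V * V := if b then (p.2, p.1) else p.

(* Executions of the procedure.  [trace adj ori es s cs es' s'] : starting at
   iteration i = size es with sigma_i = s, where es = [e_1;...;e_i], the
   sequence of choices cs (in execution order) is admissible and leads to
   the state where es' = [e_1;...;e_j] remain and sigma_j = s'.
   The orientation of e_i chosen at iteration i is given by
   [orient (ori i sigma_i) e_i], an arbitrary rule. *)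
Inductive trace (adj : rel V) (ori : nat -> {set {set V}} -> bool) :
    seq (V * V) -> {set {set V}} -> seq (V * V) -> seq (V * V) ->
    {set {set V}} -> Prop :=
| trace_nil es s : trace adj ori es s [::] es s
| trace_step es p s c cs es' s' :
    c \in cand adj s (orient (ori (size es).+1 s) p) es ->
    trace adj ori es (Swap s (orient (ori (size es).+1 s) p) c) cs es' s' ->
    trace adj ori (rcons es p) s (c :: cs) es' s'.

End Matchings.

From mathcomp Require Import all_boot.
Set Implicit Arguments. Unset Strict Implicit. Unset Printing Implicit Defensive.

(* The procedure inverts hat-psi one edge at a time.  In
   sigma_{i-1} = Swap_{sigma_i}((u,v),(u',v')) the partners of u and v are u' and v',
   so hat-psi({e_i}, sigma_{i-1}) = sigma_i.  Along an execution sigma_i stays a perfect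
   matching containing e_1, ..., e_i: the edges e_j, j < i, survive the swap since they
   avoid e_i and, by the choice of (u',v'), differ from {u',v'}.  This gives (1) and
   one half of (2).  Conversely, if hat-psi(M, sigma_0) = sigma_k, choosing at step i the
   partners of u and v in hat-psi({e_1,...,e_{i-1}}, sigma_0) is admissible and leads
   back to sigma_0; the path condition on G is what makes hat-psi({e}, .) map perfect
   matchings to perfect matchings.  Finally, the choice at step i is the pair of
   partners of u, v in sigma_{i-1}, and the rest of the execution forces
   sigma_{i-1} = hat-psi({e_1,...,e_{i-1}}, sigma_0); hence (3). *)

Lemma setDUK (T : finType) (A B C : {set T}) :
  B \subset A -> A :&: C \subset B -> ((A :\: B) :|: C) :\: C :|: B = A.
Proof.
move=> /subsetP sBA /subsetP sACB; apply/setP => x; rewrite !inE.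
case xB: (x \in B); first by rewrite sBA ?orbT.
case xC: (x \in C); case xA: (x \in A) => //=.
by rewrite -xB sACB // inE xA.
Qed.

Lemma eq_set2 (T : finType) (a b c d : T) : [set a; b] = [set c; d] ->
  (a = c /\ b = d) \/ (a = d /\ b = c).
Proof.
move=> E.
have : a \in [set c; d] by rewrite -E set21.
have : b \in [set c; d] by rewrite -E set22.
have : c \in [set a; b] by rewrite E set21.
have : d \in [set a; b] by rewrite E set22.
by rewrite !inE; do 4 case/orP=> /eqP ?; subst; auto.
Qed.

Section PerfectMatchings.
Variables (V : finType) (adj : rel V).
Implicit Types (s : {set {set V}}) (e : {set V}) (p uv : V * V) (es : seq (V * V)).

Definition path_closed :=
  forall a b c d, a != d -> adj a b -> adj b c -> adj c d -> adj a d.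

Lemma P1_P2_graph : is_P1 adj \/ is_P2 adj ->
  [/\ symmetric adj, irreflexive adj & path_closed].
Proof.
case=> [adjE | [r [part [side [_ adjE]]]]]; split.
- by move=> u v; rewrite !adjE eq_sym.
- by move=> u; rewrite adjE eqxx.
- by move=> a b c d ad _ _ _; rewrite adjE.
- by move=> u v; rewrite !adjE eq_sym [side v == _]eq_sym.
- by move=> u; rewrite adjE !eqxx.
- move=> a b c d _; rewrite !adjE.
  move=> /andP[/eqP-> ab] /andP[/eqP-> bc] /andP[/eqP-> cd]; rewrite eqxx /=.
  by move: ab bc cd; case: (side a); case: (side b); case: (side c); case: (side d).
Qed.

Lemma is_edge_set2 a b : adj a b -> is_edge adj [set a; b].
Proof. by move=> ab; apply/existsP; exists a; apply/existsP; exists b; rewrite ab eqxx. Qed.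

Lemma is_edgeE e : is_edge adj e -> exists a b, adj a b /\ e = [set a; b].
Proof. by case/existsP=> a /existsP[b /andP[ab /eqP->]]; exists a, b. Qed.

Lemma pm_edge s e : is_pm adj s -> e \in s -> is_edge adj e.
Proof. by case/andP=> /forall_inP edges _; apply: edges. Qed.

Lemma pm_cover s x : is_pm adj s -> exists2 e, e \in s & x \in e.
Proof.
case/andP=> _ /forallP/(_ x)/cards1P[e Ee].
by have := set11 e; rewrite -Ee inE => /andP[]; exists e.
Qed.

Lemma pm_uniq s x e e' :
  is_pm adj s -> e \in s -> e' \in s -> x \in e -> x \in e' -> e = e'.
Proof.
case/andP=> _ /forallP/(_ x)/cards1P[f Ef] es e's xe xe'.
have onlyf g : g \in s -> x \in g -> g = f by move=> gs xg; apply/set1P; rewrite -Ef inE gs.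
by rewrite (onlyf e es xe) (onlyf e' e's xe').
Qed.

Lemma pm_intro s :
  (forall e, e \in s -> is_edge adj e) ->
  (forall x, exists2 e, e \in s & x \in e) ->
  (forall x e e', e \in s -> e' \in s -> x \in e -> x \in e' -> e = e') ->
  is_pm adj s.
Proof.
move=> edges cover uniqe; apply/andP; split; first exact/forall_inP.
apply/forallP => x; apply/cards1P; have [e es xe] := cover x; exists e.
apply/setP => f; rewrite !inE; apply/andP/eqP => [[fs xf] | ->] //.
exact: uniqe xf xe.
Qed.

Lemma pm_partner s u : is_pm adj s -> [set u; partner s u] \in s.
Proof.
move=> pm; have [e es ue] := pm_cover u pm.
have [w uw] : exists w, [set u; w] \in s.
  have [a [b [_ Ee]]] := is_edgeE (pm_edge pm es).
  by move: ue es; rewrite Ee => /set2P[] <- ?; [exists b | exists a; rewrite setUC].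
by rewrite /partner; case: pickP => [// | /(_ w)]; rewrite uw.
Qed.

Lemma pm_partnerE s u w : is_pm adj s -> [set u; w] \in s -> partner s u = w.
Proof.
move=> pm uw.
have := pm_uniq pm (pm_partner u pm) uw (set21 _ _) (set21 _ _).
by case/eq_set2=> [[_ ->] | [<- ->]].
Qed.

Lemma partner_Swap s uv c : is_pm adj (Swap s uv c) ->
  (partner (Swap s uv c) uv.1, partner (Swap s uv c) uv.2) = c.
Proof.
case: c => c1 c2 pm.
by rewrite (pm_partnerE (w := c1) pm) ?(pm_partnerE (w := c2) pm) // /Swap !inE eqxx !orbT.
Qed.

Lemma SwapK s a b c d : is_pm adj s -> [set a; b] \in s -> [set c; d] \in s ->
  Swap (Swap s (a, b) (c, d)) (a, c) (b, d) = s.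
Proof.
move=> pm ab cd; apply: setDUK.
  by apply/subsetP => f; rewrite !inE => /orP[] /eqP->.
apply/subsetP => f; rewrite !inE => /andP[fs /orP[] /eqP Ef]; apply/orP; left;
  apply/eqP; [apply: (pm_uniq (x := a) pm fs ab) | apply: (pm_uniq (x := b) pm fs ab)];
  by rewrite ?Ef ?set21 ?set22.
Qed.

Hypotheses (adj_sym : symmetric adj) (adj_irr : irreflexive adj).

Lemma pm_adj s x y : is_pm adj s -> [set x; y] \in s -> adj x y.
Proof.
move=> pm xy; have [a [b [ab /eq_set2[] [-> ->]]]] := is_edgeE (pm_edge pm xy) => //.
by rewrite adj_sym.
Qed.

Lemma pm_neq s x y : is_pm adj s -> [set x; y] \in s -> x != y.
Proof. by move=> pm /(pm_adj pm); apply: contraTneq => ->; rewrite adj_irr. Qed.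

Lemma Swap_pm s a b c d :
  is_pm adj s -> [set a; b] \in s -> [set c; d] \in s -> [set a; b] != [set c; d] ->
  adj a c -> adj b d -> is_pm adj (Swap s (a, b) (c, d)).
Proof.
move=> pm ab cd neq ac bd; rewrite /Swap /=.
set E1 := [set a; b]; set E2 := [set c; d].
have old e x : e \in s -> x \in e -> x \in E1 :|: E2 -> e \in [set E1; E2].
  move=> es xe /setUP[] xE; rewrite in_set2; apply/orP; [left | right]; apply/eqP.
    exact: pm_uniq pm es ab xe xE.
  exact: pm_uniq pm es cd xe xE.
have new : E1 :|: E2 = [set a; c] :|: [set b; d] by rewrite setUACA.
have meet x : x \in E1 -> x \in E2 -> False.
  by move=> xE1 xE2; move/eqP: neq; apply; apply: pm_uniq pm ab cd xE1 xE2.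
have disj x : x \in [set a; c] -> x \in [set b; d] -> False.
  move=> /set2P[] -> /set2P[] E.
  - by move: (pm_neq pm ab); rewrite E eqxx.
  - by apply: (meet a); rewrite ?set21 // E set22.
  - by apply: (meet c); rewrite ?set21 // E set22.
  - by move: (pm_neq pm cd); rewrite E eqxx.
apply: pm_intro.
- move=> e; rewrite !inE => /orP[/andP[_ /(pm_edge pm) //] | /orP[] /eqP->];
  exact: is_edge_set2.
- move=> x; case: (boolP (x \in E1 :|: E2)) => [| xE].
    rewrite new inE => /orP[] xe; [exists [set a; c] | exists [set b; d]] => //;
    by rewrite !inE eqxx ?orbT.
  have [e es xe] := pm_cover x pm; exists e => //.
  rewrite !inE es andbT orbC; apply/orP; right.
  by apply: contraNN xE => /orP[] /eqP <-; rewrite in_setU xe ?orbT.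
move=> x e e'; rewrite [e \in _]in_setU [e' \in _]in_setU !in_setD.
have newE f : f \in [set [set a; c]; [set b; d]] -> x \in f -> x \in E1 :|: E2.
  by move=> /set2P[] -> xf; rewrite new in_setU xf ?orbT.
case/orP=> [/andP[ne es] | ne] /orP[/andP[ne' e's] | ne'].
- exact: pm_uniq pm es e's.
- by move=> xe /(newE _ ne') /(old _ _ es xe); rewrite (negPf ne).
- by move=> /(newE _ ne) xE xe'; move: (old _ _ e's xe' xE); rewrite (negPf ne').
- move: ne ne'; rewrite !in_set2 => /orP[] /eqP-> /orP[] /eqP-> xe xe' //.
  all: by case: (disj x).
Qed.

Lemma psi1E s p : psi1 s p = Swap s (p.1, partner s p.1) (p.2, partner s p.2).
Proof. by []. Qed.

Hypothesis adj_closed : path_closed.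

Lemma psi1_pm s p : is_pm adj s -> adj p.1 p.2 -> is_pm adj (psi1 s p).
Proof.
case: p => u v pm /= uv; rewrite psi1E /=.
have uu' := pm_partner u pm; have vv' := pm_partner v pm.
have [uvs | uv_notin] := boolP ([set u; v] \in s).
  have vus : [set v; u] \in s by rewrite setUC.
  rewrite (pm_partnerE pm uvs) (pm_partnerE pm vus).
  by rewrite /Swap /= (setUC [set v]) setUid setUC setD1K.
move: (partner s u) (partner s v) uu' vv' => u' v' uu' vv'.
have neq : [set u; u'] != [set v; v'].
  apply: contraNneq uv_notin => E.
  have : v \in [set u; u'] by rewrite E set21.
  by case/set2P=> [vu | ->] //; move: uv; rewrite vu adj_irr.
apply: Swap_pm => //; apply: (adj_closed (b := u) (c := v)) => //.
- apply: contraNneq neq => u'v'.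
  by apply/eqP/(pm_uniq (x := u') pm uu' vv'); rewrite ?u'v' set22.
- by rewrite adj_sym (pm_adj pm uu').
- exact: pm_adj pm vv'.
Qed.

Lemma psi1_Swap s uv c : is_pm adj s -> [set uv.1; uv.2] \in s -> [set c.1; c.2] \in s ->
  is_pm adj (Swap s uv c) -> psi1 (Swap s uv c) uv = s.
Proof.
case: uv c => u v [c1 c2] pm /= uvs cs pm'.
by rewrite psi1E; case: (partner_Swap pm') => /= -> ->; apply: SwapK.
Qed.

Lemma Swap_psi1 s uv : is_pm adj s -> Swap (psi1 s uv) uv (partner s uv.1, partner s uv.2) = s.
Proof. by case: uv => u v pm; apply: SwapK => //; apply: pm_partner. Qed.

Lemma orient_edge b p : [set (orient b p).1; (orient b p).2] = edge_of p.
Proof. by case: b => //=; rewrite /edge_of setUC. Qed.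

Lemma psi1_orient s b p : psi1 s (orient b p) = psi1 s p.
Proof.
case: b p => [[u v]|//]; rewrite /psi1 /=.
by rewrite [[set v; u]]setUC [[set partner s v; _]]setUC [[set [set v; _]; _]]setUC.
Qed.

Lemma psi_rcons es p s : psi (rcons es p) s = psi1 (psi es s) p.
Proof. exact: foldl_rcons. Qed.

Lemma psi_pm es s : is_pm adj s -> all (fun p => adj p.1 p.2) es -> is_pm adj (psi es s).
Proof.
elim: es s => //= p es IH s pm /andP[ap aes].
exact: IH (psi1_pm pm ap) aes.
Qed.

Lemma psi1_keep s p e : e \in s -> [disjoint edge_of p & e] -> e \in psi1 s p.
Proof.
move=> es dis; rewrite psi1E /Swap /= !inE es andbT; apply/orP; left.
have [p1e p2e] : p.1 \notin e /\ p.2 \notin e.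
  by rewrite (disjointFr dis (set21 p.1 p.2)) (disjointFr dis (set22 p.1 p.2)).
apply/norP; split; [apply: contraNneq p1e | apply: contraNneq p2e] => ->; exact: set21.
Qed.

Definition endpoints es : seq V := flatten [seq [:: p.1; p.2] | p <- es].

Lemma mem_endpoints es q x : q \in es -> x \in edge_of q -> x \in endpoints es.
Proof.
move=> qes xq; apply/flattenP; exists [:: q.1; q.2]; first exact: map_f.
by move: xq; rewrite !inE.
Qed.

Lemma uniq_endpoints_rcons es p : uniq (endpoints (rcons es p)) ->
  uniq (endpoints es) /\ {in es, forall q, [disjoint edge_of p & edge_of q]}.
Proof.
rewrite /endpoints map_rcons flatten_rcons cat_uniq => /and3P[-> notin _].
split=> // q qes; apply/pred0P => x /=; apply/negbTE/andP => -[xp xq].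
case/hasP: notin; exists x; last exact: mem_endpoints qes xq.
by move: xp; rewrite !inE.
Qed.

Lemma psi_edges es s : uniq (endpoints es) -> all (fun q => edge_of q \in psi es s) es.
Proof.
elim/last_ind: es => // es p IH /uniq_endpoints_rcons[u dis].
rewrite all_rcons psi_rcons; apply/andP; split.
  by rewrite psi1E /Swap !inE eqxx !orbT.
by apply/allP => q qes; apply: psi1_keep; [apply: (allP (IH u)) | apply: dis].
Qed.

Lemma candP s uv c es :
  reflect [/\ [set c.1; c.2] \in s, is_pm adj (Swap s uv c)
            & [set c.1; c.2] \notin [set edge_of q | q in es]]
          (c \in cand adj s uv es).
Proof. rewrite /cand /Nbr /arrow /Omega !inE andbC -andbA; exact: and3P. Qed.
End PerfectMatchings.

Section Executions.
Variables (V : finType) (adj : rel V) (ori : nat -> {set {set V}} -> bool).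
Implicit Types (s : {set {set V}}) (p : V * V) (es cs : seq (V * V)).

Definition pm_containing es s :=
  [/\ is_pm adj s, all (fun q => edge_of q \in s) es & uniq (endpoints es)].

Lemma pm_containing_Swap es p s b c :
  pm_containing (rcons es p) s -> c \in cand adj s (orient b p) es ->
  pm_containing es (Swap s (orient b p) c).
Proof.
case=> _; rewrite all_rcons => /andP[_ qs] /uniq_endpoints_rcons[u dis].
case/candP=> _ pm' notq; split=> //; apply/allP => q qes.
rewrite /Swap orient_edge !inE (allP qs q qes) andbT; apply/orP; left; apply/norP; split.
  apply/eqP => Eqp; have := disjointFr (dis q qes) (set21 p.1 p.2).
  by rewrite Eqp /edge_of set21.
by apply: contraNneq notq => <-; apply: imset_f.
Qed.

Lemma pm_containing_trace es s cs es' s' :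
  trace adj ori es s cs es' s' -> pm_containing es s -> pm_containing es' s'.
Proof. by elim=> // {}es p {}s c {}cs {}es' {}s' Hc _ IH /pm_containing_Swap/(_ Hc). Qed.

Lemma psi1_Swap_cand es p s b c :
  pm_containing (rcons es p) s -> c \in cand adj s (orient b p) es ->
  psi1 (Swap s (orient b p) c) p = s.
Proof.
case=> pm; rewrite all_rcons => /andP[ps _] _ /candP[cs pm' _].
by rewrite -(psi1_orient _ b); apply: (psi1_Swap pm _ cs pm'); rewrite orient_edge.
Qed.

Lemma partner_cand es p s b : is_pm adj s -> all (fun q => edge_of q \in s) es ->
  uniq (endpoints (rcons es p)) ->
  let uv := orient b p in let c := (partner s uv.1, partner s uv.2) in
  c \in cand adj (psi1 s p) uv es /\ Swap (psi1 s p) uv c = s.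
Proof.
move=> pm qs /uniq_endpoints_rcons[_ dis] uv c.
have back : Swap (psi1 s p) uv c = s by rewrite -(psi1_orient _ b) (Swap_psi1 _ pm).
split=> //; apply/candP; split; last 1 first.
- apply/imsetP => -[q qes Eq].
  have up : uv.1 \in edge_of p by rewrite -(orient_edge b) set21.
  have Eu : [set uv.1; partner s uv.1] = edge_of q.
    apply: (pm_uniq (x := partner s uv.1) pm (pm_partner _ pm) (allP qs q qes)).
      exact: set22.
    by rewrite -Eq set21.
  by have := disjointFr (dis q qes) up; rewrite -Eu set21.
- by rewrite -(psi1_orient _ b) psi1E /Swap /= !inE eqxx !orbT.
- by rewrite back.
Qed.

Lemma trace_nilE s cs es' s0 : trace adj ori [::] s cs es' s0 -> cs = [::] /\ s0 = s.
Proof. by move E: {1}[::] => es t; case: es s cs es' s0 / t E => // es p; case: es. Qed.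

Lemma trace_rconsE es p s cs s0 : trace adj ori (rcons es p) s cs [::] s0 ->
  let uv := orient (ori (size es).+1 s) p in
  exists c cs', [/\ cs = c :: cs', c \in cand adj s uv es
                  & trace adj ori es (Swap s uv c) cs' [::] s0].
Proof.
move E: (rcons es p) => es1; move E': {1}[::] => es2 t.
case: es1 s cs es2 s0 / t E E' => [es1 s <- /(congr1 size)|]; first by rewrite size_rcons.
by move=> es1 p1 s c cs es' s' + + /rcons_inj[-> ->] -> uv => Hc t; exists c, cs.
Qed.

Lemma psi_trace es s cs s0 :
  pm_containing es s -> trace adj ori es s cs [::] s0 -> psi es s0 = s.
Proof.
elim/last_ind: es s cs => [|es p IH] s cs inv; first by case/trace_nilE=> _ ->.
case/trace_rconsE=> c [cs' [_ Hc t]].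
by rewrite psi_rcons (IH _ _ (pm_containing_Swap inv Hc) t) (psi1_Swap_cand inv Hc).
Qed.

Lemma trace_inj es s cs cs' s0 : pm_containing es s ->
  trace adj ori es s cs [::] s0 -> trace adj ori es s cs' [::] s0 -> cs = cs'.
Proof.
elim/last_ind: es s cs cs' => [|es p IH] s cs cs' inv.
  by case/trace_nilE=> -> _ /trace_nilE[-> _].
case/trace_rconsE=> c [cs1 [-> Hc t]] /trace_rconsE[c' [cs1' [-> Hc' t']]].
have inv1 := pm_containing_Swap inv Hc; have inv1' := pm_containing_Swap inv Hc'.
have Ec : c = c'.
  have [[pm1 _ _] [pm1' _ _]] := (inv1, inv1').
  rewrite -(partner_Swap pm1) -(partner_Swap pm1').
  by rewrite -(psi_trace inv1 t) -(psi_trace inv1' t').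
by rewrite -Ec in t' *; rewrite (IH _ _ _ inv1 t t').
Qed.

Hypotheses (adj_sym : symmetric adj) (adj_irr : irreflexive adj)
  (adj_closed : path_closed adj).

Lemma trace_psi es s0 : is_pm adj s0 -> all (fun p => adj p.1 p.2) es ->
  uniq (endpoints es) -> exists cs, trace adj ori es (psi es s0) cs [::] s0.
Proof.
move=> pm0; elim/last_ind: es => [|es p IH]; first by exists [::]; apply: trace_nil.
rewrite all_rcons => /andP[_ aes] u; have [u' _] := uniq_endpoints_rcons u.
have [cs t] := IH aes u'; rewrite psi_rcons.
pose b := ori (size es).+1 (psi1 (psi es s0) p).
have pm := psi_pm adj_sym adj_irr adj_closed pm0 aes.
have [Hc back] := partner_cand b pm (psi_edges s0 u') u.
by eexists; apply: trace_step Hc _; rewrite back; apply: t.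
Qed.
End Executions.

Theorem proposition7 (V : finType) (n : nat) (adj : rel V)
  (ori : nat -> {set {set V}} -> bool)
  (M : seq (V * V)) (sk : {set {set V}}) :
  #|V| = n.*2 ->
  (is_P1 adj \/ is_P2 adj) ->
  (* M = {e_1,...,e_k} is a matching, e_i = {(nth M (i-1)).1, (nth M (i-1)).2} *)
  all (fun p => adj p.1 p.2) M ->
  uniq (flatten [seq [:: p.1; p.2] | p <- M]) ->
  is_pm adj sk ->
  all (fun p => edge_of p \in sk) M ->
  (* (1) well defined: e_i in sigma_i at iteration i *)
  (forall cs es p s, trace adj ori M sk cs (rcons es p) s -> edge_of p \in s) /\
  (* (2) possible outputs *)
  (forall s0, is_pm adj s0 ->
     ((exists cs, trace adj ori M sk cs [::] s0) <-> psi M s0 = sk)) /\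
  (* (3) distinct executions give distinct outputs *)
  (forall cs cs' s0, trace adj ori M sk cs [::] s0 ->
     trace adj ori M sk cs' [::] s0 -> cs = cs').
Proof.
move=> _ /P1_P2_graph[adj_sym adj_irr adj_closed] aM uM pmk eM.
have inv : pm_containing adj M sk by [].
split; [|split].
- move=> cs es p s /pm_containing_trace/(_ inv)[_].
  by rewrite all_rcons => /andP[].
- move=> s0 pm0; split=> [[cs /(psi_trace inv)] // | <-].
  exact: trace_psi.
- by move=> cs cs' s0; apply: trace_inj inv.
Qed.
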